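(* Let $G$ be either the line network $L_n$ with $n\ge 2$ or the ring network $C_n$ with $n\ge 3$. Suppose a group-testing measurement matrix $A$ for $G$ (in the sense defined in the context) distinguishes all binary vectors $x\in\{0,1\}^n$ having at most two ones, meaning that distinct such vectors produce distinct outcome vectors. Then $A$ has at least $n$ rows.
   Context: The line network $L_n$ on nodes $\{1,\dots,n\}$ has edges $\{i,i+1\}$ for $1\le i\le n-1$. The ring network $C_n$ additionally has the edge $\{n,1\}$. A group-testing measurement matrix for a graph $G$ on $\{1,\dots,n\}$ is a matrix $A\in\{0,1\}^{m\times n}$ in which every nonzero row has a support that induces a connected subgraph of $G$. Given $x\in\{0,1\}^n$, the outcome of row $i$ is the Boolean OR $\bigvee_{j:A_{ij}=1}x_j$. *)

(* Nodes {1..n} are represented 0-indexed as 'I_n. *)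
From mathcomp Require Import all_boot all_order all_algebra.
Set Implicit Arguments. Unset Strict Implicit. Unset Printing Implicit Defensive.

Definition line_adj (n : nat) : rel 'I_n :=
  fun i j => (i.+1 == j :> nat) || (j.+1 == i :> nat).

Definition ring_adj (n : nat) : rel 'I_n :=
  fun i j => [|| line_adj i j,
                 (i == 0 :> nat) && (j == n.-1 :> nat) |
                 (j == 0 :> nat) && (i == n.-1 :> nat)].

Definition induced_connected (n : nat) (G : rel 'I_n) (S : {set 'I_n}) : Prop :=
  forall x y, x \in S -> y \in S ->
    connect [rel u v | [&& u \in S, v \in S & G u v]] x y.

Definition row_support (m n : nat) (A : 'M[bool]_(m, n)) (i : 'I_m) : {set 'I_n} :=
  [set j | A i j].

Definition gt_matrix_for (m n : nat) (G : rel 'I_n) (A : 'M[bool]_(m, n)) : Prop :=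
  forall i : 'I_m, row_support A i != set0 -> induced_connected G (row_support A i).

Definition outcome (m n : nat) (A : 'M[bool]_(m, n)) (x : {ffun 'I_n -> bool})
  : {ffun 'I_m -> bool} :=
  [ffun i => [exists j, A i j && x j]].

Definition weight (n : nat) (x : {ffun 'I_n -> bool}) : nat := #|[set j | x j]|.

Definition distinguishes_le2 (m n : nat) (A : 'M[bool]_(m, n)) : Prop :=
  forall x y : {ffun 'I_n -> bool}, weight x <= 2 -> weight y <= 2 ->
    x != y -> outcome A x != outcome A y.

From mathcomp Require Import all_boot all_order all_algebra.
From mathcomp Require Import zify.

(* Give every node k the cyclic predecessor [ord_pred k]
   (k-1, and n-1 for k = 0).  Since A separates {k, pred k} from {pred k},
   some row contains k but not pred k; call k an "entry" of that row's
   support.  On the ring C_n a connected set has at most one entry (walking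
   from one entry to another inside the set forces the set to contain the
   predecessor of one of them), so distinct nodes get distinct rows and
   n <= m.  The line L_n is a subgraph of C_n, so sets connected in L_n are
   connected in C_n and the line case reduces to the ring case. *)

(* Distinguishing {a, b} from {a} requires a row that sees b but not a. *)
Lemma separating_row m n (A : 'M[bool]_(m, n)) (a b : 'I_n) :
  distinguishes_le2 A -> a != b -> exists i, A i b && ~~ A i a.
Proof.
move=> distA neq_ab.
pose x : {ffun 'I_n -> bool} := [ffun j => (j == a) || (j == b)].
pose y : {ffun 'I_n -> bool} := [ffun j => j == a].
have wx : weight x <= 2.
  rewrite /weight.
  have -> : [set j | x j] = [set a; b] by apply/setP => j; rewrite !inE ffunE.
  by rewrite cards2; case: (a != b).
have wy : weight y <= 2.
  rewrite /weight.
  have -> : [set j | y j] = [set a] by apply/setP => j; rewrite !inE ffunE.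
  by rewrite cards1.
have neq_xy : x != y.
  by apply/eqP => /ffunP /(_ b); rewrite !ffunE eqxx orbT eq_sym (negbTE neq_ab).
have [i /andP [Aib Nia] | none] := pickP (fun i => A i b && ~~ A i a).
  by exists i; rewrite Aib Nia.
case/eqP: (distA x y wx wy neq_xy); apply/ffunP => i; rewrite !ffunE.
have [Aia | Nia] := boolP (A i a).
  by apply/idP/idP => _; apply/existsP; exists a; rewrite Aia ffunE eqxx.
have Nib : A i b = false by move: (none i); rewrite (negbTE Nia) andbT.
apply/existsP/existsP => -[j /andP [Aij]]; rewrite ffunE => /=.
  by case/orP => /eqP Ej; subst j; rewrite ?(negbTE Nia) ?Nib in Aij.
by move=> /eqP Ej; subst j; rewrite (negbTE Nia) in Aij.
Qed.

Lemma connected_crossing n (G : rel 'I_n) (S : {set 'I_n}) (P : pred 'I_n) u v :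
  induced_connected G S -> u \in S -> v \in S -> P u -> ~~ P v ->
  exists x y, [/\ x \in S, y \in S, G x y, P x & ~~ P y].
Proof.
move=> connS Su Sv Pu; have /connectP [p walk ->] := connS u v Su Sv.
elim: p u Su Pu walk => /= [|w p IHp] u Su Pu; first by rewrite Pu.
case/andP => /and3P [_ Sw Guw] walk Pv.
have [Pw | NPw] := boolP (P w); first exact: IHp walk Pv.
by exists u, w.
Qed.

Lemma gt_matrix_for_sub m n (G G' : rel 'I_n) (A : 'M[bool]_(m, n)) :
  subrel G G' -> gt_matrix_for G A -> gt_matrix_for G' A.
Proof.
move=> subGG' gtA i ne x y Sx Sy; apply: connect_sub (gtA i ne x y Sx Sy).
by move=> u v /and3P [Su Sv Guv]; apply: connect1; rewrite /= Su Sv subGG'.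
Qed.

Lemma rows_lower_bound m n (G : rel 'I_n) (A : 'M[bool]_(m, n)) (p : 'I_n -> 'I_n) :
  (forall k, p k != k) ->
  (forall S, induced_connected G S -> forall k l, k \in S -> l \in S ->
     p k \notin S -> p l \notin S -> k = l) ->
  gt_matrix_for G A -> distinguishes_le2 A -> n <= m.
Proof.
move=> p_neq one_entry gtA distA.
have sep k : exists i, A i k && ~~ A i (p k) by exact: (@separating_row m n A (p k) k distA (p_neq k)).
pose row_of k := xchoose (sep k).
have entry k : k \in row_support A (row_of k) /\ p k \notin row_support A (row_of k).
  by have /andP [] := xchooseP (sep k); rewrite !inE.
suff inj_row : injective row_of by have := leq_card _ inj_row; rewrite !card_ord.
move=> k l same_row; have [Sk Nk] := entry k; have [Sl Nl] := entry l.
rewrite same_row in Sk Nk; apply: one_entry Sk Sl Nk Nl.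
by apply: gtA; apply/set0Pn; exists l; case: (entry l).
Qed.

Lemma ord_predE n (k : 'I_n) :
  ord_pred k = (if k == 0 :> nat then n.-1 else k.-1) :> nat.
Proof.
case: k => [[|k] lt_kn] /=; first by rewrite add0n modn_small //; lia.
by rewrite modnDr modn_small // ltnW.
Qed.

Lemma ord_pred_neq n (k : 'I_n) : 1 < n -> ord_pred k != k.
Proof.
move=> n_gt1; apply/eqP => /(congr1 (@nat_of_ord n)); rewrite ord_predE.
by have := ltn_ord k; case: ifP => /eqP; lia.
Qed.

(* On the ring, a connected set has at most one entry for [ord_pred]: from
   entry k to entry l > k, the set must leave the arc [k, l) either forward
   at l (so it contains l-1) or backward at k (so it contains pred k). *)
Lemma ring_one_entry n (S : {set 'I_n}) (k l : 'I_n) :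
  induced_connected (@ring_adj n) S -> k \in S -> l \in S ->
  ord_pred k \notin S -> ord_pred l \notin S -> k = l.
Proof.
move=> connS.
wlog lt_kl : k l / k < l.
  move=> W; case: (ltngtP k l) => [h|h|h]; first exact: W.
    by move=> Sk Sl Nk Nl; apply/esym/(W l k h).
  by move=> *; apply: val_inj.
move=> Sk Sl Nk Nl.
have arc_k : (k <= k) && (k < l) by rewrite leqnn lt_kl.
have arc_l : ~~ ((k <= l) && (l < l)) by rewrite ltnn andbF.
have [x [y [Sx Sy Gxy Px Py]]] :=
  @connected_crossing n _ S (fun w => (k <= w) && (w < l)) k l connS Sk Sl arc_k arc_l.
have exit : y = ord_pred k \/ x = ord_pred l.
  move: Gxy Px Py; rewrite /ring_adj /line_adj /= => Gxy Px Py.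
  have := ltn_ord l; have := ltn_ord x; have := ltn_ord y; clear arc_k arc_l.
  case/or3P: Gxy => [/orP [] /eqP E | /andP [/eqP E1 /eqP E2] | /andP [/eqP E1 /eqP E2]]
    ? ? ?; [right | left | left | exfalso; lia];
    apply: ord_inj; rewrite ord_predE; case: ifP => /eqP; lia.
by case: exit => E; rewrite -E ?Sx ?Sy in Nk Nl.
Qed.

Theorem mainTheorem2 (n m : nat) (G : rel 'I_n) (A : 'M[bool]_(m, n)) :
  (G = @line_adj n /\ 2 <= n) \/ (G = @ring_adj n /\ 3 <= n) ->
  gt_matrix_for G A ->
  distinguishes_le2 A ->
  n <= m.
Proof.
move=> graphG gtA distA.
have line_in_ring : subrel (@line_adj n) (@ring_adj n).
  by move=> i j adj; rewrite /ring_adj adj.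
have [ring_gtA n_gt1] : gt_matrix_for (@ring_adj n) A /\ 1 < n.
  case: graphG => -[EG n_ge]; subst G.
  - by split; first exact: gt_matrix_for_sub gtA.
  - by split; last exact: ltnW.
apply: (@rows_lower_bound m n _ A (@ord_pred n)) ring_gtA distA.
  by move=> k; exact: ord_pred_neq.
by move=> S connS k l; exact: ring_one_entry.
Qed.
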